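(* Let $\lambda \in P$ and $\lhd \in \mathrm{RO}(\lambda, \Delta^{+})$. Then the total order $<$ on $L := \mathrm{Inv}(\lambda)$ is an affine reflection order, i.e.: (1) if $\alpha^{\vee}, \beta^{\vee} \in L$ and $\alpha^{\vee}+\beta^{\vee}$ is a positive real affine coroot, then $\alpha^{\vee}+\beta^{\vee} \in L$ and either $\alpha^{\vee} < \alpha^{\vee}+\beta^{\vee} < \beta^{\vee}$ or $\beta^{\vee} < \alpha^{\vee}+\beta^{\vee} < \alpha^{\vee}$; (2) if $\alpha^{\vee}, \beta^{\vee}$ are positive real affine coroots with $\alpha^{\vee}+\beta^{\vee} \in L$, then either ($\alpha^{\vee} \in L$ and $\alpha^{\vee} < \alpha^{\vee}+\beta^{\vee}$) or ($\beta^{\vee} \in L$ and $\beta^{\vee} < \alpha^{\vee}+\beta^{\vee}$).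
   Context: Let $\mathfrak{g}$ be a finite-dimensional complex simple Lie algebra with root system $\Delta$, positive roots $\Delta^{+}$, weight lattice $P$ and pairing $\langle\cdot,\cdot\rangle$; $\alpha^\vee$ is the coroot of $\alpha$. For $\lambda\in P$, $\Delta^{+}(\lambda)_{>0}$, $\Delta^{+}(\lambda)_{=0}$, $\Delta^{+}(\lambda)_{<0}$ denote the sets of $\alpha \in \Delta^{+}$ with $\langle\lambda,\alpha^\vee\rangle$ respectively $>0$, $=0$, $<0$. A total order $\lhd$ on $\Delta^{+}$ is a reflection order if whenever $\alpha,\beta,\alpha+\beta\in\Delta^+$, either $\alpha\lhd\alpha+\beta\lhd\beta$ or $\beta\lhd\alpha+\beta\lhd\alpha$; $\mathrm{RO}(\lambda,\Delta^+)$ is the set of reflection orders $\lhd$ with $\alpha\lhd\beta\lhd\gamma$ for all $\alpha\in\Delta^+(\lambda)_{<0}$, $\beta\in\Delta^+(\lambda)_{=0}$, $\gamma\in\Delta^+(\lambda)_{>0}$. Affine coroots: let $\tilde\delta$ be a formal symbol; real affine coroots are $\gamma^{\vee}+k\tilde\delta$ ($\gamma\in\Delta$, $k\in\mathbb{Z}$); for $\beta^\vee=\gamma^\vee+k\tilde\delta$ set $\overline{\beta^\vee}:=\gamma^\vee$, $\overline{\beta}:=\gamma$, $\deg(\beta^\vee):=k$; $\beta^\vee$ is positive if $k>0$ or ($k=0$ and $\gamma\in\Delta^+$), negative otherwise. $t_\lambda(\gamma^\vee+k\tilde\delta)=\gamma^\vee+(k-\langle\lambda,\gamma^\vee\rangle)\tilde\delta$,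 and $\mathrm{Inv}(\lambda)$ is the set of positive real affine coroots $\beta^\vee$ with $t_\lambda(\beta^\vee)$ negative. For $\beta^\vee\in\mathrm{Inv}(\lambda)$ one has $\langle\lambda,\overline{\beta^\vee}\rangle>0$ and $\overline\beta\in\Delta^+(\lambda)_{>0}\sqcup(-\Delta^+(\lambda)_{<0})$; set $d(\beta^\vee):=\deg(\beta^\vee)/\langle\lambda,\overline{\beta^\vee}\rangle$. Define a total order $\prec$ on $\Delta^+(\lambda)_{>0}\sqcup(-\Delta^+(\lambda)_{<0})$: every element of $\Delta^+(\lambda)_{>0}$ precedes every element of $-\Delta^+(\lambda)_{<0}$; on $\Delta^+(\lambda)_{>0}$, $\gamma\prec\gamma'$ iff $\gamma\lhd\gamma'$; on $-\Delta^+(\lambda)_{<0}$, $-\alpha\prec-\alpha'$ iff $\alpha\lhd\alpha'$. The total order $<$ on $\mathrm{Inv}(\lambda)$ is: $\beta^\vee<\beta'^\vee$ iff $d(\beta^\vee)<d(\beta'^\vee)$, or $d(\beta^\vee)=d(\beta'^\vee)$ and $\overline{\beta'}\prec\overline{\beta}$. *)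

From HB Require Import structures.
From mathcomp Require Import all_boot all_order all_algebra.
Set Implicit Arguments. Unset Strict Implicit. Unset Printing Implicit Defensive.
Import Order.TTheory GRing.Theory Num.Theory.
Local Open Scope ring_scope.

Section RootSystems.
Variables (R : realFieldType) (n : nat).
Notation V := 'rV[R]_n.

Definition dot (u v : V) : R := \sum_(i < n) u 0 i * v 0 i.

Definition coroot (a : V) : V := (2 / dot a a) *: a.

Definition pairing (lam a : V) : R := dot lam (coroot a).

Definition is_integer (x : R) : Prop := exists z : int, x = z%:~R.

Definition is_irreducible_reduced_root_system (D : seq V) : Prop :=
  D != [::] /\
  (0 : V) \notin D /\
  (span D == fullv)%VS /\
  (forall a b, a \in D -> b \in D -> b - pairing b a *: a \in D) /\
  (forall a b, a \in D -> b \in D -> is_integer (pairing b a)) /\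
  (forall a (c : R), a \in D -> c *: a \in D -> c = 1 \/ c = -1) /\
  (forall P : pred V,
     (forall a b, a \in D -> b \in D -> P a -> ~~ P b -> dot a b = 0) ->
     (forall a, a \in D -> P a) \/ (forall a, a \in D -> ~~ P a)).

Definition is_positive_system (D : seq V) (Dp : pred V) : Prop :=
  exists v : V, (forall a, a \in D -> dot v a != 0) /\
    (forall a, Dp a <-> (a \in D /\ 0 < dot v a)).

Definition in_weight_lattice (D : seq V) (lam : V) : Prop :=
  forall a, a \in D -> is_integer (pairing lam a).

Definition is_reflection_order (Dp : pred V) (ltr : rel V) : Prop :=
  [/\ (forall a, Dp a -> ~~ ltr a a),
      (forall a b c, Dp a -> Dp b -> Dp c -> ltr a b -> ltr b c -> ltr a c),
      (forall a b, Dp a -> Dp b -> a != b -> ltr a b || ltr b a)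
    & (forall a b, Dp a -> Dp b -> Dp (a + b) ->
         (ltr a (a + b) && ltr (a + b) b) || (ltr b (a + b) && ltr (a + b) a))].

Definition in_RO (Dp : pred V) (lam : V) (ltr : rel V) : Prop :=
  is_reflection_order Dp ltr /\
  (forall a b, Dp a -> Dp b ->
     ((pairing lam a < 0) && (pairing lam b == 0) -> ltr a b) /\
     ((pairing lam a == 0) && (0 < pairing lam b) -> ltr a b) /\
     ((pairing lam a < 0) && (0 < pairing lam b) -> ltr a b)).

(* Affine coroots gamma^vee + k delta~ are represented by the pair
   (gamma^vee, k) : V * int (the first component is the coroot vector). *)
Definition acoroot := (V * int)%type.

Definition aadd (x y : acoroot) : acoroot := (x.1 + y.1, x.2 + y.2).

Definition is_real_acoroot (D : seq V) (x : acoroot) : Prop :=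
  exists2 g, g \in D & x.1 = coroot g.

(* overline{beta}: the root gamma with gamma^vee = x.1, i.e. 2 c / (c,c) *)
Definition abar (x : acoroot) : V := (2 / dot x.1 x.1) *: x.1.

Definition is_pos_acoroot (D : seq V) (Dp : pred V) (x : acoroot) : Prop :=
  exists2 g, g \in D &
    x.1 = coroot g /\ ((0 < x.2)%R \/ (x.2 = 0 /\ Dp g)).

(* Inv(lam): positive real affine coroots beta with t_lam(beta) negative,
   i.e. not positive (the image is again a real affine coroot). *)
Definition in_Inv (D : seq V) (Dp : pred V) (lam : V) (x : acoroot) : Prop :=
  is_pos_acoroot D Dp x /\
  ~ (exists2 g, g \in D &
       x.1 = coroot g /\
       (0 < x.2%:~R - dot lam x.1 \/ (x.2%:~R - dot lam x.1 = 0 /\ Dp g))).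

Definition dInv (lam : V) (x : acoroot) : R := x.2%:~R / dot lam x.1.

(* the order prec on Delta^+(lam)_{>0} \sqcup (-Delta^+(lam)_{<0}) *)
Definition precI (Dp : pred V) (ltr : rel V) (g g' : V) : bool :=
  if Dp g then (if Dp g' then ltr g g' else true)
  else (if Dp g' then false else ltr (- g) (- g')).

Definition ltInv (Dp : pred V) (ltr : rel V) (lam : V) (x y : acoroot) : Prop :=
  dInv lam x < dInv lam y \/
  (dInv lam x = dInv lam y /\ precI Dp ltr (abar y) (abar x)).

End RootSystems.

From HB Require Import structures.
From mathcomp Require Import all_boot all_order all_algebra.
From mathcomp Require Import zify ring lra.
Set Implicit Arguments. Unset Strict Implicit. Unset Printing Implicit Defensive.
Import Order.TTheory GRing.Theory Num.Theory.
Local Open Scope ring_scope.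

(* An element of Inv(lam) is g^v + k delta with p := <lam, g^v> > 0, and d = k / p.
   Adding affine coroots adds both k and p, so the d-value of a sum is the mediant
   of the d-values of the summands; this gives both statements when these d-values
   differ, and d(a) <= d(a + b) when only a lies in Inv(lam).  Ties are broken by
   the order on roots, and reduce to a fact about the finite root system: if
   a^v + b^v = g^v for positive roots a, b, g, then g lies between a and b in every
   reflection order.  By the rank-two classification g is one of a + b, a + 2b,
   a + 3b, (a + b)/2, (a + b)/3, and in each case g is reached from a and b by a
   chain of sums of two positive roots, to which the reflection-order axiom applies. *)

Section Euclidean.
Variables (R : realFieldType) (n : nat).
Implicit Types (c : R) (u v w g h k : 'rV[R]_n).

Lemma dotC u v : dot u v = dot v u.
Proof. by apply: eq_bigr => i _; rewrite mulrC. Qed.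

Lemma dotDl u v w : dot (u + v) w = dot u w + dot v w.
Proof. by rewrite /dot -big_split; apply: eq_bigr => i _; rewrite mxE mulrDl. Qed.

Lemma dotZl c u w : dot (c *: u) w = c * dot u w.
Proof. by rewrite /dot mulr_sumr; apply: eq_bigr => i _; rewrite mxE mulrA. Qed.

Lemma dotNl u w : dot (- u) w = - dot u w.
Proof. by rewrite -scaleN1r dotZl mulN1r. Qed.

Lemma dotDr u v w : dot w (u + v) = dot w u + dot w v.
Proof. by rewrite dotC dotDl !(dotC w). Qed.

Lemma dotZr c u w : dot w (c *: u) = c * dot w u.
Proof. by rewrite dotC dotZl dotC. Qed.

Lemma dotNr u w : dot w (- u) = - dot w u.
Proof. by rewrite dotC dotNl dotC. Qed.

Lemma dot_ge0 u : 0 <= dot u u.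
Proof. by apply: sumr_ge0 => i _; rewrite -expr2 sqr_ge0. Qed.

Lemma dot_gt0 u : u != 0 -> 0 < dot u u.
Proof.
move=> u0; rewrite lt0r dot_ge0 andbT; apply: contra u0.
rewrite /dot psumr_eq0 => [/allP u_eq0|i _]; last by rewrite -expr2 sqr_ge0.
apply/eqP/rowP => j; rewrite mxE.
by apply/eqP; have := u_eq0 j (mem_index_enum j); rewrite /= mulf_eq0 orbb.
Qed.

Lemma dot_neq0 u : u != 0 -> dot u u != 0.
Proof. by move/dot_gt0/gt_eqF->. Qed.

Lemma dot_coroot u g : dot u (coroot g) = 2 * dot u g / dot g g.
Proof. by rewrite /coroot dotZr mulrAC. Qed.

Lemma coroot_scale_gt0 g : g != 0 -> 0 < 2 / dot g g.
Proof. by move=> g0; rewrite divr_gt0 // dot_gt0. Qed.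

Lemma coroot_eq0 g : (coroot g == 0) = (g == 0).
Proof.
rewrite /coroot scaler_eq0; have [->|g0] := eqVneq g 0; first by rewrite orbT.
by rewrite orbF gt_eqF // coroot_scale_gt0.
Qed.

Lemma corootN g : coroot (- g) = - coroot g.
Proof. by rewrite /coroot dotNl dotNr opprK scalerN. Qed.

Lemma corootZ c g : c != 0 -> g != 0 -> coroot (c *: g) = c^-1 *: coroot g.
Proof.
move=> c0 g0; rewrite /coroot dotZl dotZr !scalerA; congr (_ *: _).
by field; rewrite c0 dot_neq0.
Qed.

Lemma corootK g : g != 0 -> coroot (coroot g) = g.
Proof.
move=> g0; rewrite corootZ ?gt_eqF ?coroot_scale_gt0 // /coroot scalerA.
by rewrite mulVf ?scale1r // gt_eqF ?coroot_scale_gt0.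
Qed.

Lemma coroot_inj g h : g != 0 -> h != 0 -> coroot g = coroot h -> g = h.
Proof. by move=> g0 h0 gh; rewrite -(corootK g0) gh corootK. Qed.

Lemma dot_coroot_gt0 u g : g != 0 -> (0 < dot u (coroot g)) = (0 < dot u g).
Proof. by move=> g0; rewrite /coroot dotZr pmulr_rgt0 // coroot_scale_gt0. Qed.

Lemma pairing_self g : g != 0 -> pairing g g = 2.
Proof. by move=> g0; rewrite /pairing dot_coroot mulfK ?dot_neq0. Qed.

Lemma pairingDl u v g : pairing (u + v) g = pairing u g + pairing v g.
Proof. by rewrite /pairing dotDl. Qed.

Lemma pairingNr u g : pairing u (- g) = - pairing u g.
Proof. by rewrite /pairing corootN dotNr. Qed.

Lemma pairing_eq0 u g : g != 0 -> (pairing u g == 0) = (dot u g == 0).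
Proof.
move=> g0; rewrite /pairing dot_coroot mulf_eq0 invr_eq0 (negbTE (dot_neq0 g0)).
by rewrite orbF mulf_eq0 pnatr_eq0.
Qed.

Lemma pairing_eq0C u v : u != 0 -> v != 0 -> (pairing u v == 0) = (pairing v u == 0).
Proof. by move=> u0 v0; rewrite !pairing_eq0 // dotC. Qed.

Lemma pairing_swap u v : u != 0 -> v != 0 ->
  pairing u v = dot u u / dot v v * pairing v u.
Proof.
by move=> u0 v0; rewrite /pairing !dot_coroot (dotC v u); field; rewrite !dot_neq0.
Qed.

Lemma pairing_coroot_sum u g h k : coroot g + coroot h = coroot k ->
  pairing u g + pairing u h = pairing u k.
Proof. by move=> ghk; rewrite /pairing -dotDr ghk. Qed.

Lemma cauchy_schwarz_lt u v : u != 0 -> (forall c, v != c *: u) ->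
  dot u v ^+ 2 < dot u u * dot v v.
Proof.
move=> u0 v_indep; set c := dot u v / dot u u.
have uu_gt0 := dot_gt0 u0.
have vcu : v - c *: u != 0 by rewrite subr_eq0 v_indep.
have := dot_gt0 vcu.
rewrite dotDl dotNl !dotDr !dotNr !dotZl !dotZr (dotC v u).
have -> : dot v v - c * dot u v - (c * dot u v - c * (c * dot u u)) =
          (dot u u * dot v v - dot u v ^+ 2) / dot u u.
  by rewrite /c; field; rewrite gt_eqF.
by rewrite pmulr_lgt0 ?invr_gt0 // subr_gt0.
Qed.

Lemma pairing_mul u v : u != 0 -> v != 0 ->
  pairing u v * pairing v u = 4 * dot u v ^+ 2 / (dot u u * dot v v).
Proof.
by move=> u0 v0; rewrite /pairing !dot_coroot (dotC v u); field; rewrite !dot_neq0.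
Qed.

Lemma pairing_mul_ge0 u v : u != 0 -> v != 0 -> 0 <= pairing u v * pairing v u.
Proof.
move=> u0 v0; rewrite pairing_mul //.
by apply: divr_ge0; apply: mulr_ge0; rewrite ?sqr_ge0 ?dot_ge0.
Qed.

Lemma pairing_mul_lt4 u v : u != 0 -> v != 0 -> (forall c, v != c *: u) ->
  pairing u v * pairing v u < 4.
Proof.
move=> u0 v0 v_indep; rewrite pairing_mul //.
by rewrite ltr_pdivrMr ?mulr_gt0 ?dot_gt0 // ltr_pM2l // cauchy_schwarz_lt.
Qed.

(* Expand [k = (dot k k / 2) *: coroot k] along [coroot g + coroot h]. *)
Lemma coroot_sum_combination g h k : g != 0 -> h != 0 -> k != 0 ->
  coroot g + coroot h = coroot k ->
  k = (dot k k / dot g g) *: g + (dot k k / dot h h) *: h.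
Proof.
move=> g0 h0 k0 ghk.
have {1}-> : k = (dot k k / 2) *: coroot k.
  by rewrite /coroot scalerA -[LHS]scale1r; congr (_ *: _); field; rewrite dot_neq0.
rewrite -ghk scalerDr /coroot !scalerA.
by congr (_ *: _ + _ *: _); field; rewrite !dot_neq0.
Qed.

End Euclidean.

(* [u], [w], [n1], [n2] stand for <g, a^v>, <g, b^v>, <a, b^v>, <b, a^v>
   when a^v + b^v = g^v. *)
Lemma rank2_cartan_cases (u w n1 n2 : int) :
  u + w = 2 -> u <= 1 -> 0 <= u * (2 + n1) <= 3 -> 0 <= w * (2 + n2) <= 3 ->
  0 <= n1 * n2 <= 3 -> (u == 0) = (n1 == -2) -> (w == 0) = (n2 == -2) ->
  (n1 == 0) = (n2 == 0) ->
  [/\ u = 1, n1 = -1 & n2 = -1] \/ [/\ u = 1, n1 = 0 & n2 = 0] \/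
  [/\ u = 1, n1 = 1 & n2 = 1] \/ [/\ u = 0, n1 = -2 & n2 = -1] \/
  [/\ u = -1, n1 = -3 & n2 = -1].
Proof.
move=> uw u_le1 /andP[un1_ge0 un1_le3] /andP[wn2_ge0 wn2_le3] /andP[n12_ge0 n12_le3].
move=> u0 w0 n0.
have w_ge1 : 1 <= w by lia.
have n2_neq : n2 <> -2 by lia.
have n2_ge1 : 1 <= 2 + n2 by nia.
have w_le3 : w <= 3 by nia.
have : u = -1 \/ u = 0 \/ u = 1 by lia.
case=> [|[|]] u_val; subst u.
- have n2_val : n2 = -1 by nia.
  by subst n2; do 4 right; split; lia.
- by do 3 right; left; split; lia.
- have : n1 = -1 \/ n1 = 0 \/ n1 = 1 by nia.
  by case=> [|[|]] n1_val; subst n1; [left | right; left | right; right; left]; split; nia.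
Qed.

Section RootSystem.
Variables (R : realFieldType) (n : nat) (D : seq 'rV[R]_n).
Hypothesis HD : is_irreducible_reduced_root_system D.
Implicit Types (c : R) (a b g : 'rV[R]_n).

Lemma root_neq0 a : a \in D -> a != 0.
Proof. by case: HD => _ [D_neq0 _] aD; apply: contraNneq D_neq0 => <-. Qed.

Lemma root_reflect a b : a \in D -> b \in D -> b - pairing b a *: a \in D.
Proof. by case: HD => _ [_ [_ [refl _]]]; apply: refl. Qed.

Lemma root_pairing_int a b : a \in D -> b \in D -> is_integer (pairing b a).
Proof. by case: HD => _ [_ [_ [_ [int _]]]]; apply: int. Qed.

Lemma root_scale a c : a \in D -> c *: a \in D -> c = 1 \/ c = -1.
Proof. by case: HD => _ [_ [_ [_ [_ [red _]]]]]; apply: red. Qed.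

Lemma root_opp a : a \in D -> - a \in D.
Proof.
move=> aD; have := root_reflect aD aD; rewrite pairing_self ?root_neq0 //.
by rewrite scaler_nat mulr2n opprD addNKr.
Qed.

Lemma coroot_root_scale a b c : a \in D -> b \in D ->
  coroot b = c *: coroot a -> c = 1 \/ c = -1.
Proof.
move=> aD bD ba; have [a0 b0] := (root_neq0 aD, root_neq0 bD).
have c0 : c != 0.
  by apply: contraNneq b0 => c0; rewrite -coroot_eq0 ba c0 scale0r.
have : c^-1 *: a \in D.
  by rewrite -(corootK a0) -corootZ ?coroot_eq0 -?ba ?corootK.
by case/(root_scale aD) => /(congr1 GRing.inv); rewrite invrK ?invrN1 ?invr1; [left|right].
Qed.

Lemma root_pairing_mul_bound a b (z : int) : a \in D -> b \in D ->
  b != a -> b != - a -> pairing a b * pairing b a = z%:~R -> 0 <= z <= 3.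
Proof.
move=> aD bD ba bNa z_def; have [a0 b0] := (root_neq0 aD, root_neq0 bD).
have b_indep c : b != c *: a.
  apply: contraNneq ba => b_eq; have /(root_scale aD) : c *: a \in D by rewrite -b_eq.
  by case=> c_val; move: bNa; rewrite b_eq c_val ?scale1r ?scaleN1r eqxx.
have := pairing_mul_lt4 a0 b0 b_indep; have := pairing_mul_ge0 a0 b0.
rewrite z_def ler0z -[4]/(4%:~R) ltr_int => z_ge0 z_lt4.
by rewrite z_ge0 -ltzD1.
Qed.

Lemma coroot_sum_neq a b g : a \in D -> b \in D -> g \in D ->
  coroot a + coroot b = coroot g -> b != a /\ b != - a.
Proof.
move=> aD bD gD abg; split; apply/eqP => b_eq; move: abg; rewrite b_eq.
- move=> gE; have : coroot g = 2 *: coroot a by rewrite -gE scaler_nat mulr2n.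
  by case/(coroot_root_scale aD gD); lra.
- rewrite corootN addrN => /esym/eqP; rewrite coroot_eq0.
  by rewrite (negbTE (root_neq0 gD)).
Qed.

Lemma coroot_sum_cartan a b g : a \in D -> b \in D -> g \in D ->
  coroot a + coroot b = coroot g -> pairing g a <= 1 ->
  [/\ pairing g a = 1, pairing a b = -1 & pairing b a = -1] \/
  [/\ pairing g a = 1, pairing a b = 0 & pairing b a = 0] \/
  [/\ pairing g a = 1, pairing a b = 1 & pairing b a = 1] \/
  [/\ pairing g a = 0, pairing a b = -2 & pairing b a = -1] \/
  [/\ pairing g a = -1, pairing a b = -3 & pairing b a = -1].
Proof.
move=> aD bD gD abg u_le1.
have [[a0 b0] g0] := (root_neq0 aD, root_neq0 bD, root_neq0 gD).
have [ba bNa] := coroot_sum_neq aD bD gD abg.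
have [aNg ag] : - a != g /\ - a != - g.
  by apply: (coroot_sum_neq gD (root_opp aD) bD); rewrite corootN -abg addrC addKr.
have [bNg bg] : - b != g /\ - b != - g.
  by apply: (coroot_sum_neq gD (root_opp bD) aD); rewrite corootN -abg addrK.
rewrite eqr_oppLR eqr_opp in aNg ag; rewrite eqr_oppLR eqr_opp in bNg bg.
case: (root_pairing_int aD gD) => zu u_int.
case: (root_pairing_int bD gD) => zw w_int.
case: (root_pairing_int bD aD) => zn1 n1_int.
case: (root_pairing_int aD bD) => zn2 n2_int.
have uw : pairing g a + pairing g b = 2 by rewrite (pairing_coroot_sum _ abg) pairing_self.
have ag_val : pairing a g = 2 + pairing a b.
  by rewrite -(pairing_coroot_sum _ abg) pairing_self.
have bg_val : pairing b g = 2 + pairing b a.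
  by rewrite -(pairing_coroot_sum _ abg) pairing_self // addrC.
have zuw : zu + zw = 2 by apply: (@intr_inj R); rewrite intrD -u_int -w_int.
have zu_le1 : zu <= 1 by rewrite -(ler_int R) -u_int.
have zun1 : 0 <= zu * (2 + zn1) <= 3.
  by apply: (root_pairing_mul_bound gD aD) => //; rewrite ag_val u_int n1_int intrM intrD.
have zwn2 : 0 <= zw * (2 + zn2) <= 3.
  by apply: (root_pairing_mul_bound gD bD) => //; rewrite bg_val w_int n2_int intrM intrD.
have zn12 : 0 <= zn1 * zn2 <= 3.
  by apply: (root_pairing_mul_bound aD bD) => //; rewrite n1_int n2_int intrM.
have zu0 : (zu == 0) = (zn1 == -2).
  rewrite -(eqr_int R zu) -(eqr_int R zn1) -u_int -n1_int pairing_eq0C // ag_val.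
  by rewrite addrC addr_eq0.
have zw0 : (zw == 0) = (zn2 == -2).
  rewrite -(eqr_int R zw) -(eqr_int R zn2) -w_int -n2_int pairing_eq0C // bg_val.
  by rewrite addrC addr_eq0.
have zn0 : (zn1 == 0) = (zn2 == 0).
  by rewrite -(eqr_int R zn1) -(eqr_int R zn2) -n1_int -n2_int pairing_eq0C.
rewrite u_int n1_int n2_int.
have := rank2_cartan_cases zuw zu_le1 zun1 zwn2 zn12 zu0 zw0 zn0.
case=> [|[|[|[|]]]] [-> -> ->]; rewrite ?intrN;
  by [left | right; left | do 2 right; left | do 3 right; left | do 4 right].
Qed.

(* The five shapes occur in types A2, B2, G2, B2 and G2 respectively. *)
Lemma coroot_sum_shapes a b g : a \in D -> b \in D -> g \in D ->
  coroot a + coroot b = coroot g -> pairing g a <= 1 ->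
  g = a + b \/
  (g *+ 2 = a + b /\ g - a \in D) \/
  [/\ g *+ 3 = a + b, a - g \in D & b - g \in D] \/
  (g = a + b *+ 2 /\ a + b \in D) \/
  [/\ g = a + b *+ 3, a + b \in D & a + b *+ 2 \in D].
Proof.
move=> aD bD gD abg u_le1.
have [[a0 b0] g0] := (root_neq0 aD, root_neq0 bD, root_neq0 gD).
set x := dot g g / dot a a; set y := dot g g / dot b b.
have gE : g = x *: a + y *: b := coroot_sum_combination a0 b0 g0 abg.
have u_val : pairing g a = x * (2 + pairing a b).
  by rewrite pairing_swap // -(pairing_coroot_sum _ abg) pairing_self.
have w_val : pairing g b = y * (2 + pairing b a).
  by rewrite pairing_swap // -(pairing_coroot_sum _ abg) pairing_self // addrC.
have xy : x * pairing a b = y * pairing b a.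
  by rewrite /x /y pairing_swap //; field; rewrite !dot_neq0.
have uw : pairing g a + pairing g b = 2 by rewrite (pairing_coroot_sum _ abg) pairing_self.
have ab_root : pairing b a = -1 -> a + b \in D.
  by move=> n2; have := root_reflect aD bD; rewrite n2 scaleN1r opprK addrC.
case: (coroot_sum_cartan aD bD gD abg u_le1) => [|[|[|[|]]]] [u n1 n2].
- have x1 : x = 1 by move: u_val; rewrite u n1; lra.
  have y1 : y = 1 by move: w_val; rewrite n2; lra.
  by left; rewrite gE x1 y1 !scale1r.
- have x2 : x = 2^-1 by move: u_val; rewrite u n1; lra.
  have y2 : y = 2^-1 by move: w_val; rewrite n2; lra.
  right; left; split; last by have := root_reflect aD gD; rewrite u scale1r.
  by rewrite gE x2 y2 -scalerDr -scaler_nat scalerA mulfV ?scale1r // pnatr_eq0.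
- have x3 : x = 3^-1 by move: u_val; rewrite u n1; lra.
  have y3 : y = 3^-1 by move: w_val; rewrite n2; lra.
  have w : pairing g b = 1 by lra.
  do 2 right; left; split.
  + by rewrite gE x3 y3 -scalerDr -scaler_nat scalerA mulfV ?scale1r // pnatr_eq0.
  + by have := root_opp (root_reflect aD gD); rewrite u scale1r opprB.
  + by have := root_opp (root_reflect bD gD); rewrite w scale1r opprB.
- have y2 : y = 2 by move: w_val; rewrite n2; lra.
  have x1 : x = 1 by move: xy; rewrite n1 n2 y2; lra.
  do 3 right; left; split; last exact: ab_root.
  by rewrite gE x1 y2 scale1r scaler_nat.
- have y3 : y = 3 by move: w_val; rewrite n2; lra.
  have x1 : x = 1 by move: u_val; rewrite u n1; lra.
  have abD := ab_root n2.
  have n3 : pairing (a + b) b = -1 by rewrite pairingDl n1 pairing_self //; lra.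
  do 4 right; split=> //; first by rewrite gE x1 y3 scale1r scaler_nat.
  by have := root_reflect bD abD; rewrite n3 scaleN1r opprK mulr2n addrA.
Qed.

End RootSystem.

Section PositiveSystem.
Variables (R : realFieldType) (n : nat) (D : seq 'rV[R]_n) (Dp : pred 'rV[R]_n).
Hypotheses (HD : is_irreducible_reduced_root_system D) (HP : is_positive_system D Dp).
Implicit Types (a b g : 'rV[R]_n).

Lemma pos_root a : Dp a -> a \in D.
Proof. by case: HP => v [_ DpE] /DpE[]. Qed.

Lemma pos_rootN a : Dp a -> ~~ Dp (- a).
Proof.
case: HP => v [_ DpE] /DpE[_ va]; apply/negP => /DpE[_].
by rewrite dotNr oppr_gt0 ltNge ltW.
Qed.

Lemma nonpos_rootN a : a \in D -> ~~ Dp a -> Dp (- a).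
Proof.
case: HP => v [v_reg DpE] aD aNpos; apply/DpE.
split; first exact: root_opp.
rewrite dotNr oppr_gt0 lt_neqAle v_reg //= leNgt.
by apply: contra aNpos => va; apply/DpE.
Qed.

Lemma pos_rootD a b : Dp a -> Dp b -> a + b \in D -> Dp (a + b).
Proof.
case: HP => v [_ DpE] /DpE[_ va] /DpE[_ vb] abD; apply/DpE.
by rewrite dotDr addr_gt0.
Qed.

Lemma pos_root_coroot_sum a b g : g \in D -> coroot a + coroot b = coroot g ->
  Dp a -> Dp b -> Dp g.
Proof.
case: HP => v [_ DpE] gD abg /DpE[aD va] /DpE[bD vb]; apply/DpE; split=> //.
rewrite -(dot_coroot_gt0 _ (root_neq0 HD gD)) -abg dotDr.
by rewrite addr_gt0 // dot_coroot_gt0 // (root_neq0 HD).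
Qed.

Lemma nonpos_root_coroot_sum a b g : a \in D -> b \in D -> g \in D ->
  coroot a + coroot b = coroot g -> ~~ Dp a -> ~~ Dp b -> ~~ Dp g.
Proof.
move=> aD bD gD abg aN bN; rewrite -[g]opprK; apply: pos_rootN.
apply: (pos_root_coroot_sum (root_opp HD gD) _ (nonpos_rootN aD aN) (nonpos_rootN bD bN)).
by rewrite !corootN -opprD abg.
Qed.

End PositiveSystem.

Section Between.
Variables (T : Type) (r : rel T).

Definition between a b c := (r a b && r b c) || (r c b && r b a).

Lemma betweenC a b c : between a b c = between c b a.
Proof. by rewrite /between orbC. Qed.

Variable P : pred T.
Hypotheses (r_irr : forall a, P a -> ~~ r a a)
  (r_trans : forall a b c, P a -> P b -> P c -> r a b -> r b c -> r a c).

Ltac between_solve :=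
  rewrite /between; repeat (case/orP || case/andP || move/andP=> [? ?] || move=> ?);
  repeat match goal with
  | H1 : is_true (r ?a ?b), H2 : is_true (r ?b ?c) |- _ =>
      lazymatch goal with
      | _ : is_true (r a c) |- _ => fail
      | _ => have := @r_trans a b c ltac:(assumption) ltac:(assumption)
                       ltac:(assumption) H1 H2; move=> ?
      end
  end;
  try match goal with H : is_true (r ?a ?a) |- _ =>
    by move: (@r_irr a ltac:(assumption)); rewrite H end;
  try (apply/orP; first [left; apply/andP; split; assumption
                        | right; apply/andP; split; assumption]).

Lemma between_split_l a b c d : P a -> P b -> P c -> P d ->
  between a b d -> between b c d -> between a b c.
Proof. by move=> Pa Pb Pc Pd; between_solve. Qed.

Lemma between_trans a b c d : P a -> P b -> P c -> P d ->
  between a b d -> between b c d -> between a c d.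
Proof. by move=> Pa Pb Pc Pd; between_solve. Qed.

Lemma between_lt a b c : P a -> P b -> P c -> between a b c -> r a c -> r a b && r b c.
Proof. by move=> Pa Pb Pc; between_solve; apply/andP. Qed.

End Between.

Lemma reflection_order_irr (R : realFieldType) n (Dp : pred 'rV[R]_n) ltr :
  is_reflection_order Dp ltr -> forall a, Dp a -> ~~ ltr a a.
Proof. by case. Qed.

Lemma reflection_order_trans (R : realFieldType) n (Dp : pred 'rV[R]_n) ltr :
  is_reflection_order Dp ltr ->
  forall a b c, Dp a -> Dp b -> Dp c -> ltr a b -> ltr b c -> ltr a c.
Proof. by case. Qed.

Section ReflectionOrder.
Variables (R : realFieldType) (n : nat) (D : seq 'rV[R]_n) (Dp : pred 'rV[R]_n).
Variable ltr : rel 'rV[R]_n.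
Hypotheses (HD : is_irreducible_reduced_root_system D) (HP : is_positive_system D Dp).
Hypothesis HO : is_reflection_order Dp ltr.
Implicit Types (a b g : 'rV[R]_n).

Let ltr_irr := reflection_order_irr HO.
Let ltr_trans := reflection_order_trans HO.

Lemma between_add a b g : Dp a -> Dp b -> a + b = g -> Dp g -> between ltr a g b.
Proof. by case: HO => _ _ _ add Pa Pb <- Pab; apply: add. Qed.

Lemma between_half_sum a b g : Dp a -> Dp b -> Dp g ->
  g *+ 2 = a + b -> g - a \in D -> between ltr a g b.
Proof.
move=> Pa Pb Pg gab dD; have [Pd|Nd] := boolP (Dp (g - a)).
- apply: (between_split_l ltr_irr ltr_trans Pa Pg Pb Pd).
    by apply: between_add; rewrite // addrC subrK.
  by apply: between_add; rewrite // addrA -mulr2n gab [a + b]addrC addrK.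
- have Pd : Dp (a - g) by rewrite -opprB; exact: (nonpos_rootN HD HP dD Nd).
  rewrite betweenC; apply: (between_split_l ltr_irr ltr_trans Pb Pg Pa Pd).
    by apply: between_add; rewrite // addrA [b + a]addrC -gab mulr2n addrK.
  by apply: between_add; rewrite // addrC subrK.
Qed.

Lemma between_add_r a b c : Dp a -> Dp b -> Dp c -> Dp (c + b) ->
  between ltr a c b -> between ltr a (c + b) b.
Proof.
move=> Pa Pb Pc Pcb acb; apply: (between_trans ltr_irr ltr_trans Pa Pc Pcb Pb acb).
exact: between_add.
Qed.

Lemma between_third_sum a b g : Dp a -> Dp b -> Dp g ->
  g *+ 3 = a + b -> a - g \in D -> b - g \in D -> between ltr a g b.
Proof.
have sum_eq x y : x + y = g *+ 3 -> (x - g) + (y - g) = g.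
  by move=> xy; rewrite addrACA -opprD xy !mulrS mulr0n addr0 addrK.
move=> Pa Pb Pg gab; wlog Px : a b Pa Pb gab / Dp (a - g) => [IH xD yD|xD yD].
  have [Px|Nx] := boolP (Dp (a - g)); first exact: IH.
  have [Py|Ny] := boolP (Dp (b - g)); first by rewrite betweenC; apply: IH; rewrite // addrC.
  have := pos_rootD HP (nonpos_rootN HD HP xD Nx) (nonpos_rootN HD HP yD Ny).
  rewrite -opprD sum_eq // => /(_ (root_opp HD (pos_root HP Pg))).
  by rewrite (negbTE (pos_rootN HP Pg)).
have xyg : (a - g) + (b - g) = g by rewrite sum_eq.
have gax : between ltr g a (a - g) by apply: between_add; rewrite // addrC subrK.
have [Py|Ny] := boolP (Dp (b - g)).
- have xgy : between ltr (a - g) g (b - g) by apply: between_add.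
  have gby : between ltr g b (b - g) by apply: between_add; rewrite // addrC subrK.
  rewrite betweenC in xgy; have yga := between_split_l ltr_irr ltr_trans Py Pg Pa Px xgy gax.
  by rewrite betweenC in yga; apply: (between_split_l ltr_irr ltr_trans Pa Pg Pb Py yga gby).
- have Pz : Dp (g - b) by rewrite -opprB; exact: (nonpos_rootN HD HP yD Ny).
  have gxz : between ltr g (a - g) (g - b).
    by apply: between_add; rewrite // -opprB -{1}xyg addrK.
  have bgz : between ltr b g (g - b) by apply: between_add; rewrite // addrC subrK.
  rewrite betweenC in gxz; rewrite betweenC in gax.
  have zag := between_trans ltr_irr ltr_trans Pz Px Pa Pg gxz gax.
  rewrite betweenC in zag; rewrite betweenC.
  exact: (between_split_l ltr_irr ltr_trans Pb Pg Pa Pz bgz zag).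
Qed.

Lemma between_coroot_sum a b g : Dp a -> Dp b -> Dp g ->
  coroot a + coroot b = coroot g -> between ltr a g b.
Proof.
wlog u_le1 : a b / pairing g a <= 1 => [IH Pa Pb Pg abg|Pa Pb Pg abg].
  have [u_le1|u_gt1] := lerP (pairing g a) 1; first exact: IH.
  rewrite betweenC; apply: IH => //; last by rewrite addrC.
  have := pairing_coroot_sum g abg; rewrite pairing_self ?(root_neq0 HD) ?(pos_root HP) //.
  by lra.
have [[aD bD] gD] := (pos_root HP Pa, pos_root HP Pb, pos_root HP Pg).
case: (coroot_sum_shapes HD aD bD gD abg u_le1) => [|[|[|[|]]]].
- by move=> gE; apply: between_add.
- by case; apply: between_half_sum.
- by case; apply: between_third_sum.
- case=> gE abD; have Pab := pos_rootD HP Pa Pb abD.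
  move: Pg; rewrite gE mulr2n addrA => Pg.
  by apply: between_add_r => //; apply: between_add.
- case=> gE abD; rewrite mulr2n addrA => ab2D.
  have Pab := pos_rootD HP Pa Pb abD; have Pab2 := pos_rootD HP Pab Pb ab2D.
  move: Pg; rewrite gE !mulrS mulr0n addr0 !addrA => Pg.
  by do 2 apply: between_add_r => //; apply: between_add.
Qed.

End ReflectionOrder.

Section PrecOrder.
Variables (R : realFieldType) (n : nat) (D : seq 'rV[R]_n) (Dp : pred 'rV[R]_n).
Variables (lam : 'rV[R]_n) (ltr : rel 'rV[R]_n).
Hypotheses (HD : is_irreducible_reduced_root_system D) (HP : is_positive_system D Dp).
Hypothesis HRO : in_RO Dp lam ltr.
Implicit Types (a b g h : 'rV[R]_n).

Let HO : is_reflection_order Dp ltr := HRO.1.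

Let ltr_irr := reflection_order_irr HO.
Let ltr_trans := reflection_order_trans HO.

Lemma RO_ltr_neg a b : Dp a -> Dp b -> pairing lam a < 0 -> 0 <= pairing lam b -> ltr a b.
Proof.
case: HRO => _ RO Pa Pb a_lt0; rewrite le_eqVlt => /orP[/eqP b0|b_gt0].
  by apply: (RO a b Pa Pb).1; rewrite a_lt0 -b0 eqxx.
by apply: (RO a b Pa Pb).2.2; rewrite a_lt0 b_gt0.
Qed.

Lemma RO_ltr_pos a b : Dp a -> Dp b -> pairing lam a <= 0 -> 0 < pairing lam b -> ltr a b.
Proof.
case: HRO => _ RO Pa Pb; rewrite le_eqVlt => /orP[/eqP a0|a_lt0] b_gt0.
  by apply: (RO a b Pa Pb).2.1; rewrite a0 eqxx b_gt0.
by apply: (RO a b Pa Pb).2.2; rewrite a_lt0 b_gt0.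
Qed.

Lemma precI_between_mixed ga gb h : gb \in D -> h \in D ->
  0 < pairing lam ga -> 0 < pairing lam gb -> 0 < pairing lam h ->
  coroot ga + coroot gb = coroot h -> Dp ga -> ~~ Dp gb ->
  precI Dp ltr ga h && precI Dp ltr h gb.
Proof.
move=> gbD hD pa pb ph abh Pa Nb; have PNb := nonpos_rootN HD HP gbD Nb.
have [Ph|Nh] := boolP (Dp h); rewrite /precI Pa (negbTE Nb) ?Ph ?(negbTE Nh) ?andbT /=.
- have hNbg : coroot h + coroot (- gb) = coroot ga by rewrite corootN -abh addrK.
  have Nb_lt_h : ltr (- gb) h by apply: RO_ltr_neg; rewrite ?pairingNr ?oppr_lt0 // ltW.
  have := between_coroot_sum HD HP HO Ph PNb Pa hNbg; rewrite betweenC.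
  by move/(between_lt ltr_irr ltr_trans PNb Pa Ph)/(_ Nb_lt_h)/andP=> [].
- have PNh := nonpos_rootN HD HP hD Nh.
  have Nhg : coroot (- h) + coroot ga = coroot (- gb).
    by rewrite !corootN -abh opprD addrAC addNr add0r.
  have Nh_lt_a : ltr (- h) ga.
    by apply: RO_ltr_neg; rewrite ?pairingNr ?oppr_lt0 // ltW.
  have := between_coroot_sum HD HP HO PNh Pa PNb Nhg.
  by move/(between_lt ltr_irr ltr_trans PNh PNb Pa)/(_ Nh_lt_a)/andP=> [].
Qed.

Lemma precI_between ga gb h : ga \in D -> gb \in D -> h \in D ->
  0 < pairing lam ga -> 0 < pairing lam gb -> 0 < pairing lam h ->
  coroot ga + coroot gb = coroot h -> between (precI Dp ltr) ga h gb.
Proof.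
move=> gaD gbD hD pa pb ph abh.
have [Pa|Na] := boolP (Dp ga); have [Pb|Nb] := boolP (Dp gb).
- have Ph := pos_root_coroot_sum HD HP hD abh Pa Pb.
  by rewrite /between /precI Pa Pb Ph; exact: (between_coroot_sum HD HP HO Pa Pb Ph abh).
- by rewrite /between precI_between_mixed.
- by rewrite betweenC /between precI_between_mixed // addrC.
- have Nh := nonpos_root_coroot_sum HD HP gaD gbD hD abh Na Nb.
  have Nabh : coroot (- ga) + coroot (- gb) = coroot (- h) by rewrite !corootN -opprD abh.
  rewrite /between /precI (negbTE Na) (negbTE Nb) (negbTE Nh).
  have neg := nonpos_rootN HD HP.
  exact: (between_coroot_sum HD HP HO (neg _ gaD Na) (neg _ gbD Nb) (neg _ hD Nh) Nabh).
Qed.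

Lemma precI_coroot_sum ga gb h : ga \in D -> h \in D -> Dp gb ->
  0 < pairing lam ga -> 0 < pairing lam h -> coroot ga + coroot gb = coroot h ->
  (Dp ga -> pairing lam gb <= 0) -> (~~ Dp ga -> 0 <= pairing lam gb) ->
  precI Dp ltr h ga.
Proof.
move=> gaD hD Pb pa ph abh pb_le0 pb_ge0; have [Pa|Na] := boolP (Dp ga).
- have Ph := pos_root_coroot_sum HD HP hD abh Pa Pb.
  have b_lt_a : ltr gb ga by apply: RO_ltr_pos => //; apply: pb_le0.
  rewrite /precI Pa Ph; have := between_coroot_sum HD HP HO Pa Pb Ph abh.
  by rewrite betweenC; move/(between_lt ltr_irr ltr_trans Pb Ph Pa)/(_ b_lt_a)/andP=> [].
- have [Ph|Nh] := boolP (Dp h); rewrite /precI (negbTE Na) ?Ph // (negbTE Nh).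
  have [PNa PNh] := (nonpos_rootN HD HP gaD Na, nonpos_rootN HD HP hD Nh).
  have Nhb : coroot (- h) + coroot gb = coroot (- ga).
    by rewrite !corootN -abh opprD addrNK.
  have Nh_lt_b : ltr (- h) gb.
    by apply: RO_ltr_neg; rewrite ?pairingNr ?oppr_lt0 // pb_ge0.
  have := between_coroot_sum HD HP HO PNh Pb PNa Nhb.
  by move/(between_lt ltr_irr ltr_trans PNh PNa Pb)/(_ Nh_lt_b)/andP=> [].
Qed.

End PrecOrder.

(* [affine_pos (Dp g) k] says that the affine coroot g^v + k delta is positive. *)
Definition affine_pos (R : numDomainType) (b : bool) (k : R) : bool :=
  (0 < k) || (k == 0) && b.

Section AffinePos.
Variable R : realFieldType.
Implicit Types (b : bool) (k p q x y : R).

Lemma affine_posN b k : affine_pos (~~ b) (- k) = ~~ affine_pos b k.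
Proof.
rewrite /affine_pos oppr_gt0 oppr_eq0 negb_or negb_and -leNgt.
by case: ltgtP => //=; rewrite andbT.
Qed.

Lemma affine_posD b1 b2 b3 k1 k2 : (b1 -> b2 -> b3) ->
  affine_pos b1 k1 -> affine_pos b2 k2 -> affine_pos b3 (k1 + k2).
Proof.
rewrite /affine_pos => b123.
move=> /orP[k1_gt0|/andP[/eqP k1_0 Pb1]] /orP[k2_gt0|/andP[/eqP k2_0 Pb2]].
- by rewrite addr_gt0.
- by rewrite k2_0 addr0 k1_gt0.
- by rewrite k1_0 add0r k2_gt0.
- by rewrite k1_0 k2_0 addr0 eqxx b123 ?orbT.
Qed.

Lemma affine_pos_gt0 b k p : affine_pos b k -> ~~ affine_pos b (k - p) -> 0 < p.
Proof.
rewrite /affine_pos negb_or negb_and -leNgt => /orP[k_gt0|/andP[/eqP k0 Pb]] /andP[kp_le0].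
  by move=> _; lra.
by rewrite Pb orbF k0 sub0r oppr_eq0 => p_neq0; rewrite lt_neqAle eq_sym p_neq0; lra.
Qed.

Lemma affine_pos_ge0 b k : affine_pos b k -> 0 <= k /\ (k = 0 -> b).
Proof.
case/orP=> [k_gt0|/andP[/eqP k0 Pb]]; last by rewrite k0.
by split=> [|k0]; [exact: ltW | move: k_gt0; rewrite k0 ltxx].
Qed.

Lemma ltr_frac x y p q : 0 < p -> 0 < q -> (x / p < y / q) = (x * q < y * p).
Proof. by move=> p_gt0 q_gt0; rewrite ltr_pdivrMr // mulrAC ltr_pdivlMr. Qed.

Lemma mediant_lt x y p q : 0 < p -> 0 < q ->
  x / p < y / q -> x / p < (x + y) / (p + q) < y / q.
Proof.
move=> p_gt0 q_gt0; have pq_gt0 : 0 < p + q by rewrite addr_gt0.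
by rewrite !ltr_frac // => xy; apply/andP; split; nra.
Qed.

Lemma mediant_eq x y p q : p != 0 -> p + q != 0 ->
  x * q = y * p -> (x + y) / (p + q) = x / p.
Proof.
move=> p0 pq0 xy; apply/eqP; rewrite eqr_div //.
by rewrite mulrDl mulrDr xy.
Qed.

(* d(a) <= d(a + b), cross-multiplied, for [a] in Inv(lam) and [b] positive with
   [t_lam b] positive, and what equality forces. *)
Lemma affine_pos_cross (da db : bool) (ka kb pa pb : R) :
  affine_pos da ka -> ~~ affine_pos da (ka - pa) ->
  affine_pos db kb -> affine_pos db (kb - pb) ->
  ka * pb <= kb * pa /\
  (ka * pb = kb * pa -> [/\ db, da -> pb <= 0 & ~~ da -> 0 <= pb]).
Proof.
move=> /[dup] Ka /affine_pos_ge0[ka_ge0 ka0] /[dup] Na.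
rewrite -affine_posN => /affine_pos_ge0[kpa_le0 kpa0].
move=> /affine_pos_ge0[kb_ge0 kb0] /affine_pos_ge0[kpb_ge0 kpb0].
have pa_gt0 := affine_pos_gt0 Ka Na.
have [pb_le0|pb_gt0] := lerP pb 0.
- split=> [|E]; first nra.
  have kb_0 : kb = 0 by nra.
  split=> [|//|Nda]; first exact: kb0.
  have [//|pb_lt0] := leP 0 pb.
  by have := ka0 (_ : ka = 0); rewrite (negbTE Nda); apply; nra.
- split=> [|E]; first nra.
  have kb_pb : kb = pb by nra.
  have ka_pa : ka = pa by nra.
  have Nda : ~~ da by apply: kpa0; lra.
  by split=> [|/(negP Nda)//|_]; [apply: kpb0; lra | exact: ltW].
Qed.

End AffinePos.

Definition adeg {R : realFieldType} {n} (x : acoroot R n) : R := x.2%:~R.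

Lemma adegD (R : realFieldType) n (x y : acoroot R n) : adeg (aadd x y) = adeg x + adeg y.
Proof. exact: intrD. Qed.

Lemma aaddC (R : realFieldType) n : commutative (@aadd R n).
Proof. by move=> x y; rewrite /aadd addrC [x.2 + _]addrC. Qed.

Section AffineCoroots.
Variables (R : realFieldType) (n : nat) (D : seq 'rV[R]_n) (Dp : pred 'rV[R]_n).
Variables (lam : 'rV[R]_n) (ltr : rel 'rV[R]_n).
Hypothesis HD : is_irreducible_reduced_root_system D.
Implicit Types (x y : acoroot R n) (g : 'rV[R]_n).

Lemma is_pos_acoroot_root x : is_pos_acoroot D Dp x -> exists2 g, g \in D & x.1 = coroot g.
Proof. by case=> g gD [xE _]; exists g. Qed.

Lemma is_pos_acorootP x g : g \in D -> x.1 = coroot g ->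
  reflect (is_pos_acoroot D Dp x) (affine_pos (Dp g) (adeg x)).
Proof.
move=> gD xE; rewrite /affine_pos /adeg ltr0z intr_eq0; apply: (iffP idP).
- by case/orP=> [k_gt0|/andP[/eqP k0 Pg]]; exists g => //; split=> //; [left | right].
- case=> g' g'D [xE' pos].
  have -> : g = g' by apply: coroot_inj; rewrite ?(root_neq0 HD) // -xE -xE'.
  by case: pos => [-> //|[-> ->]]; rewrite orbT.
Qed.

Lemma in_InvP x g : g \in D -> x.1 = coroot g ->
  reflect (in_Inv D Dp lam x)
    (affine_pos (Dp g) (adeg x) && ~~ affine_pos (Dp g) (adeg x - pairing lam g)).
Proof.
move=> gD xE; have lamE : dot lam x.1 = pairing lam g by rewrite xE.
rewrite /in_Inv lamE; apply: (iffP andP) => -[/(is_pos_acorootP gD xE) xpos tN]; split=> //.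
  case=> g' g'D [xE' t_pos].
  have g'E : g' = g by apply: coroot_inj; rewrite ?(root_neq0 HD) // -xE -xE'.
  rewrite g'E in t_pos; apply/negP: tN; rewrite negbK /affine_pos /adeg.
  by case: t_pos => [-> //|[/eqP -> ->]]; rewrite orbT.
apply/negP => /orP t_pos; apply: tN; exists g => //; split=> //.
by case: t_pos => [|/andP[/eqP]]; [left | right].
Qed.

Lemma ltInvE x y gx gy : gx != 0 -> gy != 0 -> x.1 = coroot gx -> y.1 = coroot gy ->
  ltInv Dp ltr lam x y <->
  adeg x / pairing lam gx < adeg y / pairing lam gy \/
  adeg x / pairing lam gx = adeg y / pairing lam gy /\ precI Dp ltr gy gx.
Proof.
move=> gx0 gy0 xE yE; rewrite /ltInv /dInv -[abar x]/(coroot x.1) -[abar y]/(coroot y.1).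
by rewrite xE yE !corootK.
Qed.

End AffineCoroots.

Section AffineSum.
Variables (R : realFieldType) (n : nat) (D : seq 'rV[R]_n) (Dp : pred 'rV[R]_n).
Variables (lam : 'rV[R]_n) (ltr : rel 'rV[R]_n).
Hypotheses (HD : is_irreducible_reduced_root_system D) (HP : is_positive_system D Dp).
Hypothesis HRO : in_RO Dp lam ltr.
Variables (a b : acoroot R n) (ga gb h : 'rV[R]_n).
Hypotheses (gaD : ga \in D) (gbD : gb \in D) (hD : h \in D).
Hypotheses (aE : a.1 = coroot ga) (bE : b.1 = coroot gb) (abE : (aadd a b).1 = coroot h).

Let abh : coroot ga + coroot gb = coroot h.
Proof. by rewrite -aE -bE. Qed.

Let pairing_h : pairing lam h = pairing lam ga + pairing lam gb.
Proof. by rewrite (pairing_coroot_sum _ abh). Qed.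

Let InvP := in_InvP Dp lam HD.
Let posP := is_pos_acorootP Dp HD.
Let ltE := ltInvE Dp lam ltr.
Let ga0 := root_neq0 HD gaD.
Let gb0 := root_neq0 HD gbD.
Let h0 := root_neq0 HD hD.

Lemma in_Inv_aadd : in_Inv D Dp lam a -> in_Inv D Dp lam b ->
  is_pos_acoroot D Dp (aadd a b) -> in_Inv D Dp lam (aadd a b).
Proof.
move=> /(InvP gaD aE)/andP[_ Na] /(InvP gbD bE)/andP[_ Nb].
move=> /(posP hD abE) Kab; apply/(InvP hD abE).
rewrite Kab adegD pairing_h opprD addrACA -affine_posN opprD.
rewrite -affine_posN in Na; rewrite -affine_posN in Nb.
exact: affine_posD (nonpos_root_coroot_sum HD HP gaD gbD hD abh) Na Nb.
Qed.

Lemma ltInv_aadd : in_Inv D Dp lam a -> in_Inv D Dp lam b ->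
  (ltInv Dp ltr lam a (aadd a b) /\ ltInv Dp ltr lam (aadd a b) b) \/
  (ltInv Dp ltr lam b (aadd a b) /\ ltInv Dp ltr lam (aadd a b) a).
Proof.
move=> /(InvP gaD aE)/andP[Ka Na] /(InvP gbD bE)/andP[Kb Nb].
have [pa_gt0 pb_gt0] := (affine_pos_gt0 Ka Na, affine_pos_gt0 Kb Nb).
have ph_gt0 : 0 < pairing lam h by rewrite pairing_h addr_gt0.
rewrite (ltE ga0 h0 aE abE) (ltE h0 gb0 abE bE).
rewrite (ltE gb0 h0 bE abE) (ltE h0 ga0 abE aE) adegD pairing_h.
case: (ltrgtP (adeg a / pairing lam ga) (adeg b / pairing lam gb)) => [ab_lt|ab_gt|ab_eq].
- by have /andP[? ?] := mediant_lt pa_gt0 pb_gt0 ab_lt; left; split; left.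
- have /andP[? ?] := mediant_lt pb_gt0 pa_gt0 ab_gt.
  by right; split; left; rewrite addrC [pairing lam ga + _]addrC.
- have cross : adeg a * pairing lam gb = adeg b * pairing lam ga.
    by apply/eqP; rewrite -eqr_div ?(gt_eqF pa_gt0) ?(gt_eqF pb_gt0) ?ab_eq.
  rewrite mediant_eq ?gt_eqF -?ab_eq ?addr_gt0 //.
  have := precI_between HD HP HRO gaD gbD hD pa_gt0 pb_gt0 ph_gt0 abh.
  by case/orP=> /andP[? ?]; [right | left]; split; right.
Qed.

Lemma ltInv_aadd_l : is_pos_acoroot D Dp b -> in_Inv D Dp lam (aadd a b) ->
  in_Inv D Dp lam a -> ~ in_Inv D Dp lam b -> ltInv Dp ltr lam a (aadd a b).
Proof.
move=> /(posP gbD bE) Kb /(InvP hD abE)/andP[Kh Nh] /(InvP gaD aE)/andP[Ka Na] NIb.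
have Rb : affine_pos (Dp gb) (adeg b - pairing lam gb).
  by apply/negPn/negP => Nb; apply: NIb; apply/(InvP gbD bE)/andP.
have [pa_gt0 ph_gt0] := (affine_pos_gt0 Ka Na, affine_pos_gt0 Kh Nh).
have [cross_le cross_eq] := affine_pos_cross Ka Na Kb Rb.
have pab_gt0 := ph_gt0; rewrite pairing_h in pab_gt0.
apply/(ltE ga0 h0 aE abE); rewrite adegD pairing_h.
move: cross_le; rewrite le_eqVlt => /orP[/eqP cross|cross_lt]; last first.
  by left; rewrite ltr_frac //; nra.
right; split; first by rewrite mediant_eq ?gt_eqF.
have [Pb pb_le0 pb_ge0] := cross_eq cross.
by apply: (precI_coroot_sum HD HP HRO gaD hD Pb pa_gt0 ph_gt0 abh).
Qed.

Lemma in_Inv_aadd_or : is_pos_acoroot D Dp a -> is_pos_acoroot D Dp b ->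
  in_Inv D Dp lam (aadd a b) -> in_Inv D Dp lam a \/ in_Inv D Dp lam b.
Proof.
move=> /(posP gaD aE) Ka /(posP gbD bE) Kb /(InvP hD abE)/andP[_ Nh].
have [Na|Ra] := boolP (~~ affine_pos (Dp ga) (adeg a - pairing lam ga)).
  by left; apply/(InvP gaD aE)/andP.
have [Nb|Rb] := boolP (~~ affine_pos (Dp gb) (adeg b - pairing lam gb)).
  by right; apply/(InvP gbD bE)/andP.
rewrite negbK in Ra; rewrite negbK in Rb; case/negP: Nh.
rewrite adegD pairing_h opprD addrACA.
exact: affine_posD (pos_root_coroot_sum HD HP hD abh) Ra Rb.
Qed.

End AffineSum.

Lemma in_Inv_aadd_lt (R : realFieldType) n (D : seq 'rV[R]_n) Dp lam ltr (a b : acoroot R n) :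
  is_irreducible_reduced_root_system D -> is_positive_system D Dp -> in_RO Dp lam ltr ->
  is_pos_acoroot D Dp a -> is_pos_acoroot D Dp b -> in_Inv D Dp lam (aadd a b) ->
  (in_Inv D Dp lam a /\ ltInv Dp ltr lam a (aadd a b)) \/
  (in_Inv D Dp lam b /\ ltInv Dp ltr lam b (aadd a b)).
Proof.
move=> HD HP HRO Pa Pb Iab.
have [[ga gaD aE] [gb gbD bE]] := (is_pos_acoroot_root Pa, is_pos_acoroot_root Pb).
have [h hD abE] := is_pos_acoroot_root Iab.1.
have baE : (aadd b a).1 = coroot h by rewrite aaddC.
have Iba : in_Inv D Dp lam (aadd b a) by rewrite aaddC.
have [Ia|NIa] := in_InvP Dp lam HD gaD aE; have [Ib|NIb] := in_InvP Dp lam HD gbD bE.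
- by case: (ltInv_aadd HD HP HRO gaD gbD hD aE bE abE Ia Ib) => -[? _]; [left | right].
- by left; split=> //; apply: (ltInv_aadd_l HD HP HRO gaD gbD hD aE bE abE).
- by right; split=> //; rewrite aaddC; apply: (ltInv_aadd_l HD HP HRO gbD gaD hD bE aE baE).
- by case: (in_Inv_aadd_or HD HP gaD gbD hD aE bE abE Pa Pb Iab).
Qed.

Unset Implicit Arguments.

Theorem proposition3p11 (R : realFieldType) (n : nat) (D : seq 'rV[R]_n)
  (Dp : pred 'rV[R]_n) (lam : 'rV[R]_n) (ltr : rel 'rV[R]_n) :
  is_irreducible_reduced_root_system D ->
  is_positive_system D Dp ->
  in_weight_lattice D lam ->
  in_RO Dp lam ltr ->
  (forall a b : acoroot R n,
     in_Inv D Dp lam a -> in_Inv D Dp lam b ->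
     is_pos_acoroot D Dp (aadd a b) ->
     in_Inv D Dp lam (aadd a b) /\
     ((ltInv Dp ltr lam a (aadd a b) /\ ltInv Dp ltr lam (aadd a b) b) \/
      (ltInv Dp ltr lam b (aadd a b) /\ ltInv Dp ltr lam (aadd a b) a)))
  /\
  (forall a b : acoroot R n,
     is_pos_acoroot D Dp a -> is_pos_acoroot D Dp b ->
     in_Inv D Dp lam (aadd a b) ->
     (in_Inv D Dp lam a /\ ltInv Dp ltr lam a (aadd a b)) \/
     (in_Inv D Dp lam b /\ ltInv Dp ltr lam b (aadd a b))).
Proof.
move=> HD HP _ HRO; split=> a b; last exact: in_Inv_aadd_lt.
move=> Ia Ib Pab.
have [ga gaD aE] := is_pos_acoroot_root Ia.1.
have [gb gbD bE] := is_pos_acoroot_root Ib.1.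
have [h hD abE] := is_pos_acoroot_root Pab.
split; first exact: (in_Inv_aadd HD HP gaD gbD hD aE bE abE).
exact: (ltInv_aadd HD HP HRO gaD gbD hD aE bE abE).
Qed.
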